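(* With notation as in the context, let $0\ne b\in\mathcal B_0$ be written as $b=\sum_{U\in\mathcal U}\lambda_U\chi_U$, where $\mathcal U$ is a finite family of nonempty pairwise disjoint clopen subsets of $X$ and $\lambda_U\in K\setminus\{0\}$. Then there exists $W\in\mathcal V$ with $h_W\cdot b\ne0$.
   Context: Let $X$ be an infinite, totally disconnected, compact metrizable space, $T$ a homeomorphism of $X$, $\mu$ a full (positive on nonempty open sets), ergodic, $T$-invariant Borel probability measure, $K$ a field with involution, $C_K(X)$ the $*$-algebra of locally constant functions $X\to K$, and $\mathcal A=C_K(X)\rtimes_T\mathbb Z$ the algebraic crossed product (finite sums $\sum f_it^i$, $tf=(f\circ T^{-1})t$, $(ft^i)^*=t^{-i}f^*$). Let $E$ be a nonempty clopen set, $\mathcal P$ a partition of $X\setminus E$ (finite family of nonempty pairwise disjoint clopen sets with union $X\setminus E$), $\mathcal B$ the unital $*$-subalgebra of $\mathcal A$ generated by $\{\chi_Zt:Z\in\mathcal P\}$, and $\mathcal B_0=C_K(X)\cap\mathcal B$. $\mathcal V$ is the set of nonempty sets $W=E\cap T^{-1}(Z_1)\cap\cdots\cap T^{-k+1}(Z_{k-1})\cap T^{-k}(E)$ ($k\ge1$, $Z_i\in\mathcal P$), $|W|=k$, and $h_W=\sum_{l=0}^{|W|-1}\chi_{T^l(W)}$. *)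

From Stdlib Require Import Reals SeqSeries.
From Stdlib Require List.
From HB Require Import structures.
From mathcomp Require Import all_boot all_order all_algebra.
Set Implicit Arguments. Unset Strict Implicit. Unset Printing Implicit Defensive.
Import GRing.Theory.

Section Topology.
Variables (X : Type) (opn : (X -> Prop) -> Prop).

Definition is_metric (d : X -> X -> R) : Prop :=
  (forall x y, Rle R0 (d x y)) /\ (forall x y, d x y = R0 <-> x = y) /\
  (forall x y, d x y = d y x) /\
  (forall x y z, Rle (d x z) (Rplus (d x y) (d y z))).

Definition metrizable : Prop :=
  exists d, is_metric d /\
    forall U, opn U <->
      (forall x, U x -> exists eps, Rlt R0 eps /\ forall y, Rlt (d x y) eps -> U y).

Definition compact_space : Prop :=
  forall (I : Type) (U : I -> X -> Prop),
    (forall i, opn (U i)) -> (forall x, exists i, U i x) ->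
    exists l : list I, forall x, exists i, List.In i l /\ U i x.

Definition connected_subset (S : X -> Prop) : Prop :=
  forall U V, opn U -> opn V -> (forall x, S x -> U x \/ V x) ->
    (forall x, ~ (S x /\ U x /\ V x)) ->
    (forall x, S x -> U x) \/ (forall x, S x -> V x).

Definition totally_disconnected : Prop :=
  forall S, connected_subset S -> forall x y, S x -> S y -> x = y.

Definition infinite_type : Prop := forall l : list X, exists x, ~ List.In x l.

Definition continuous_map (f : X -> X) : Prop :=
  forall U, opn U -> opn (fun x => U (f x)).

Definition homeo (T Tinv : X -> X) : Prop :=
  cancel T Tinv /\ cancel Tinv T /\ continuous_map T /\ continuous_map Tinv.

Definition clopen (Z : X -> bool) : Prop :=
  opn (fun x => Z x) /\ opn (fun x => ~~ Z x).

Inductive borel : (X -> Prop) -> Prop :=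
| borel_open U : opn U -> borel U
| borel_compl A : borel A -> borel (fun x => ~ A x)
| borel_union (A : nat -> X -> Prop) :
    (forall n, borel (A n)) -> borel (fun x => exists n, A n x).

(* Borel probability measure (values on non-Borel sets are irrelevant) *)
Definition prob_measure (mu : (X -> Prop) -> R) : Prop :=
  (forall A B, (forall x, A x <-> B x) -> mu A = mu B) /\
  (forall A, borel A -> Rle R0 (mu A)) /\
  mu (fun _ => True) = R1 /\
  (forall A : nat -> X -> Prop, (forall n, borel (A n)) ->
     (forall n m x, n <> m -> A n x -> A m x -> False) ->
     Un_cv (fun N => sum_f_R0 (fun n => mu (A n)) N) (mu (fun x => exists n, A n x))).

Definition mu_invariant (T : X -> X) (mu : (X -> Prop) -> R) : Prop :=
  forall A, borel A -> mu (fun x => A (T x)) = mu A.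

Definition is_ergodic (T : X -> X) (mu : (X -> Prop) -> R) : Prop :=
  forall A, borel A -> (forall x, A (T x) <-> A x) -> mu A = R0 \/ mu A = R1.

Definition full_measure (mu : (X -> Prop) -> R) : Prop :=
  forall U, opn U -> (exists x, U x) -> Rlt R0 (mu U).

Definition partition_of (E : X -> bool) (P : seq (X -> bool)) : Prop :=
  (forall Z, List.In Z P -> clopen Z /\ exists x, Z x) /\
  (forall Z1 Z2, List.In Z1 P -> List.In Z2 P -> Z1 <> Z2 ->
     forall x, ~~ (Z1 x && Z2 x)) /\
  (forall x, ~~ E x <-> exists Z, List.In Z P /\ Z x).

End Topology.

Section CrossedProduct.
Local Open Scope ring_scope.
Variables (X : Type) (opn : (X -> Prop) -> Prop) (K : fieldType)
          (conj : K -> K) (T Tinv : X -> X).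

Definition chi (Z : X -> bool) (x : X) : K := if Z x then 1 else 0.

Definition locally_constant (f : X -> K) : Prop :=
  forall x, exists U, opn U /\ U x /\ forall y, U y -> f y = f x.

Definition Tpow (n : int) : X -> X :=
  match n with Posz k => iter k T | Negz k => iter k.+1 Tinv end.

(* An element of the crossed product is written as a finite formal sum of
   monomials f t^i, encoded as a list of pairs (i, f).  Two such lists
   denote the same element iff they have the same coefficients [coef]. *)
Definition cp := seq (int * (X -> K)).

Definition coef (a : cp) (n : int) (x : X) : K :=
  \sum_(m <- a | m.1 == n) m.2 x.

Definition cp_add (a b : cp) : cp := a ++ b.
Definition cp_scale (c : K) (a : cp) : cp := [seq (m.1, fun x => c * m.2 x) | m <- a].
Definition cp_one : cp := [:: (Posz 0, fun _ => 1)].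
(* (f t^i)(g t^j) = f (g o T^-i) t^(i+j) *)
Definition cp_mul (a b : cp) : cp :=
  [seq (m.1 + n.1, fun x => m.2 x * n.2 (Tpow (- m.1) x)) | m <- a, n <- b].
(* (f t^i)^* = t^-i f^* = (f^* o T^i) t^-i *)
Definition cp_star (a : cp) : cp :=
  [seq (- m.1, fun x => conj (m.2 (Tpow m.1 x))) | m <- a].

Inductive Bgen (P : seq (X -> bool)) : cp -> Prop :=
| Bgen_gen Z : List.In Z P -> Bgen P [:: (Posz 1, chi Z)]
| Bgen_one : Bgen P cp_one
| Bgen_add a b : Bgen P a -> Bgen P b -> Bgen P (cp_add a b)
| Bgen_scale c a : Bgen P a -> Bgen P (cp_scale c a)
| Bgen_mul a b : Bgen P a -> Bgen P b -> Bgen P (cp_mul a b)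
| Bgen_star a : Bgen P a -> Bgen P (cp_star a).

Definition inB (P : seq (X -> bool)) (a : cp) : Prop :=
  exists l, Bgen P l /\ forall n x, coef l n x = coef a n x.

Definition inB0 (P : seq (X -> bool)) (b : X -> K) : Prop :=
  locally_constant b /\ inB P [:: (Posz 0, b)].

(* W = E \cap T^-1 Z_1 \cap ... \cap T^-(k-1) Z_(k-1) \cap T^-k E,
   encoded by the word zs = [:: Z_1; ...; Z_(k-1)], so |W| = k = size zs + 1 *)
Definition Wset (E : X -> bool) (zs : seq (X -> bool)) (x : X) : bool :=
  [&& E x,
      [forall i : 'I_(size zs), nth (fun _ => false) zs i (Tpow (Posz i.+1) x)]
    & E (Tpow (Posz (size zs).+1) x)].

Definition inV (E : X -> bool) (P : seq (X -> bool)) (zs : seq (X -> bool)) : Prop :=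
  (forall Z, List.In Z zs -> List.In Z P) /\ exists x, Wset E zs x.

(* h_W = sum_(l < |W|) chi_(T^l W);  x \in T^l W  iff  T^-l x \in W *)
Definition hW (E : X -> bool) (zs : seq (X -> bool)) (x : X) : K :=
  \sum_(l < (size zs).+1) chi (Wset E zs) (Tpow (- Posz l) x).

End CrossedProduct.

(* Proof idea.  b is locally constant, so it is nonzero on a nonempty open set
   V, which has positive measure because mu is full.  Ergodicity makes almost
   every T-orbit meet the non-null open set E, and then Poincare recurrence
   (for T and for T^-1) shows that almost every point visits E both in the
   past (or now) and in the future.  Pick such a point y in V.  Let x be the
   last visit of the backward orbit of y to E; the itinerary of the orbit of
   x through the partition P up to its first return to E spells a set W in V,
   and y lies on the orbit segment W, T W, ..., T^(|W|-1) W, so h_W(y) = 1 and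
   (h_W b)(y) = b(y) <> 0. *)
From Stdlib Require Import Reals Lra Classical FunctionalExtensionality PropExtensionality.
From Stdlib Require List.
From HB Require Import structures.
From mathcomp Require Import all_boot all_order all_algebra zify.
Import GRing.Theory.
Set Implicit Arguments. Unset Strict Implicit.

Section Borel.
Variables (X : Type) (opn : (X -> Prop) -> Prop).

Lemma borel_ext (A B : X -> Prop) :
  borel opn A -> (forall x, A x <-> B x) -> borel opn B.
Proof.
move=> hA hAB; suff -> : B = A by [].
by apply: functional_extensionality => x; apply: propositional_extensionality; split => /hAB.
Qed.

Lemma borel_or (A B : X -> Prop) :
  borel opn A -> borel opn B -> borel opn (fun x => A x \/ B x).
Proof.
move=> hA hB.
have hU : borel opn (fun x => exists n, (if n is 0 then A else B) x) by apply: borel_union; case.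
apply: (borel_ext hU) => x.
by split => [[[|n]] ?|[?|?]]; [left|right|exists 0%N|exists 1%N].
Qed.

Lemma borel_and (A B : X -> Prop) :
  borel opn A -> borel opn B -> borel opn (fun x => A x /\ B x).
Proof.
move=> hA hB; apply: (borel_ext (borel_compl (borel_or (borel_compl hA) (borel_compl hB)))).
by move=> x; split=> [h|[? ?] [|]] //; split; apply: NNPP => hn; apply: h; [left|right].
Qed.

Lemma borel_empty (A : X -> Prop) : borel opn A -> borel opn (fun _ => False).
Proof. by move=> hA; apply: (borel_ext (borel_and hA (borel_compl hA))) => x; split=> [[]|]. Qed.

Lemma borel_preimage (f : X -> X) (A : X -> Prop) :
  continuous_map opn f -> borel opn A -> borel opn (fun x => A (f x)).
Proof.
move=> hf; elim=> [U /hf|B _|F _]; [exact: borel_open|exact: borel_compl|exact: borel_union].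
Qed.

Lemma borel_iter (f : X -> X) (n : nat) (A : X -> Prop) :
  continuous_map opn f -> borel opn A -> borel opn (fun x => A (iter n f x)).
Proof.
move=> hf; elim: n A => [|n ih] A hA //.
exact: (ih (fun z => A (f z)) (borel_preimage hf hA)).
Qed.

End Borel.

Open Scope R_scope.

Lemma partial_sums_const_cv (c l : R) :
  Un_cv (fun N => sum_f_R0 (fun _ => c) N) l -> c = 0.
Proof.
move=> h; apply: NNPP => hc.
have hpos : 0 < Rabs c by apply: Rabs_pos_lt.
have [N hN] := h (Rabs c / 2) ltac:(lra).
have h1 := hN N (le_n N).
have h2 := hN N.+1 (le_S _ _ (le_n N)).
rewrite /R_dist /= in h1 h2.
move: (sum_f_R0 (fun _ => c) N) h1 h2 hpos => s; clear; split_Rabs; lra.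
Qed.

Lemma Un_cv_eventually_const (u : nat -> R) (l c : R) :
  Un_cv u l -> (forall N, (1 <= N)%N -> u N = c) -> l = c.
Proof.
move=> hu hc; apply: (UL_sequence u) => // eps he; exists 1%nat => n /leP hn.
by rewrite hc // /R_dist /Rminus Rplus_opp_r Rabs_R0.
Qed.

Section ProbabilityMeasure.
Variables (X : Type) (opn : (X -> Prop) -> Prop) (mu : (X -> Prop) -> R).
Hypothesis pm : prob_measure opn mu.

Lemma mu_ext (A B : X -> Prop) : (forall x, A x <-> B x) -> mu A = mu B.
Proof. by have [hext _] := pm; apply: hext. Qed.

Lemma mu_ge0 (A : X -> Prop) : borel opn A -> 0 <= mu A.
Proof. by have [_ [hpos _]] := pm; apply: hpos. Qed.

Lemma mu_countable_add (A : nat -> X -> Prop) :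
  (forall n, borel opn (A n)) -> (forall n m x, n <> m -> A n x -> A m x -> False) ->
  Un_cv (fun N => sum_f_R0 (fun n => mu (A n)) N) (mu (fun x => exists n, A n x)).
Proof. by have [_ [_ [_ hadd]]] := pm; apply: hadd. Qed.

(* the empty set is null: countably many copies of it are disjoint; the
   hypothesis only provides some Borel set to build it from *)
Lemma mu_empty (A : X -> Prop) : borel opn A -> mu (fun _ => False) = 0.
Proof.
move=> hA; apply: partial_sums_const_cv.
exact: (@mu_countable_add (fun _ _ => False) (fun _ => borel_empty hA) (fun _ _ _ _ f _ => f)).
Qed.

(* finite additivity, from countable additivity padded with empty sets *)
Lemma mu_add2 (A B : X -> Prop) :
  borel opn A -> borel opn B -> (forall x, A x -> B x -> False) ->
  mu (fun x => A x \/ B x) = mu A + mu B.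
Proof.
move=> hA hB hd.
pose F n := match n with 0%N => A | 1%N => B | _ => fun _ : X => False end.
have hF : forall n, borel opn (F n) by case=> [|[|n]] //=; exact: borel_empty hA.
have hdF : forall n m x, n <> m -> F n x -> F m x -> False.
  move=> n m x; case: n => [|[|n]]; case: m => [|[|m]] //= _; by [move/hd | move=> ? /hd].
have := mu_countable_add hF hdF.
rewrite (@mu_ext _ (fun x => A x \/ B x)) => [hcv|x]; last first.
  by split=> [[[|[|n]] h]|[h|h]]; [left|right|case: h|exists 0%N|exists 1%N].
apply: (Un_cv_eventually_const hcv) => -[|N] // _.
by elim: N => [|N /= ->] //; rewrite (mu_empty hA) Rplus_0_r.
Qed.

(* monotonicity and subadditivity, by splitting off a disjoint difference *)
Lemma mu_mono (A B : X -> Prop) :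
  borel opn A -> borel opn B -> (forall x, A x -> B x) -> mu A <= mu B.
Proof.
move=> hA hB hAB.
have hC := borel_and hB (borel_compl hA).
have -> : mu B = mu (fun x => A x \/ (B x /\ ~ A x)).
  by apply: mu_ext => x; split=> [hb|[/hAB|[]] //]; case: (classic (A x)); [left|right].
rewrite mu_add2 //; last by move=> x ? [].
by have := mu_ge0 hC; lra.
Qed.

Lemma mu_subadd2 (A B : X -> Prop) :
  borel opn A -> borel opn B -> mu (fun x => A x \/ B x) <= mu A + mu B.
Proof.
move=> hA hB.
have hC := borel_and hB (borel_compl hA).
have -> : mu (fun x => A x \/ B x) = mu (fun x => A x \/ (B x /\ ~ A x)).
  apply: mu_ext => x.
  by split=> [[h|h]|[h|[h _]]]; [left|case: (classic (A x)); [left|right]|left|right].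
rewrite mu_add2 //; last by move=> x ? [].
by have := mu_mono hC hB (fun x h => proj1 h); lra.
Qed.

Lemma mu_disjoint_copies_null (A : nat -> X -> Prop) :
  (forall n, borel opn (A n)) -> (forall n m x, n <> m -> A n x -> A m x -> False) ->
  (forall n, mu (A n) = mu (A 0%N)) -> mu (fun x => exists n, A n x) = 0.
Proof.
move=> hA hd hcopy.
have hcv := mu_countable_add hA hd.
have hsum : (fun n => mu (A n)) = (fun _ => mu (A 0%N)) by apply: functional_extensionality.
have hA0 : mu (A 0%N) = 0 by move: hcv; rewrite hsum; apply: partial_sums_const_cv.
apply: (Un_cv_eventually_const hcv) => N _.
by elim: N => [|N /= ->]; rewrite /= ?hcopy hA0 ?Rplus_0_r.
Qed.

Lemma positive_not_covered (V N1 N2 : X -> Prop) :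
  borel opn V -> borel opn N1 -> borel opn N2 ->
  0 < mu V -> mu N1 = 0 -> mu N2 = 0 -> exists y, V y /\ ~ N1 y /\ ~ N2 y.
Proof.
move=> bV b1 b2 hV h1 h2; apply: NNPP => hno.
have hsub : forall x, V x -> N1 x \/ N2 x.
  move=> x hx; apply: NNPP => hn; apply: hno; exists x.
  by split=> //; split=> h; apply: hn; [left|right].
have := mu_mono bV (borel_or b1 b2) hsub; have := mu_subadd2 b1 b2; lra.
Qed.

End ProbabilityMeasure.

Section IterCancel.
Variables (X : Type) (f g : X -> X).
Hypothesis gK : cancel g f.

Lemma iter_cancel (a : nat) (y : X) : iter a f (iter a g y) = y.
Proof. by elim: a y => [|a ih] y //; rewrite [iter a.+1 f _]iterSr iterS gK ih. Qed.

Lemma iter_cancelDl (a b : nat) (y : X) : iter (a + b) f (iter a g y) = iter b f y.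
Proof. by rewrite addnC iterD iter_cancel. Qed.

Lemma iter_cancelDr (a b : nat) (y : X) : iter a f (iter (a + b) g y) = iter b g y.
Proof. by rewrite iterD iter_cancel. Qed.

End IterCancel.

Section Recurrence.
Variables (X : Type) (S Sinv : X -> X) (E : X -> bool).
Hypothesis SinvK : cancel Sinv S.

Definition orbit_meets (x : X) : Prop := exists n, E (iter n S x) \/ E (iter n Sinv x).

Definition never_returns (x : X) : Prop := forall n, ~ E (iter n.+1 S x).

Definition last_visit (x : X) : Prop := E x /\ never_returns x.

Lemma last_visit_before (x : X) :
  orbit_meets x -> never_returns x -> exists j, last_visit (iter j Sinv x).
Proof.
move=> [n [hf|hb]] hx.
  by case: n hf => [|n] hf; [exists 0%N | case: (hx n)].
have [j Ej minj] := ex_minnP (ex_intro (fun j => E (iter j Sinv x)) n hb).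
exists j; split => // k hk.
case: (leqP k.+1 j) => hkj.
  have e : iter k.+1 S (iter j Sinv x) = iter (j - k.+1) Sinv x.
    by rewrite -{1}(subnKC hkj) iter_cancelDr.
  by move: hk; rewrite e => /minj; lia.
have e : iter k.+1 S (iter j Sinv x) = iter (k - j).+1 S x.
  by rewrite -(iter_cancelDl SinvK j (k - j).+1) addnS subnKC // -ltnS.
by move: hk; rewrite e; apply: hx.
Qed.

Lemma last_visits_disjoint (n m : nat) (x : X) :
  n <> m -> last_visit (iter n Sinv x) -> last_visit (iter m Sinv x) -> False.
Proof.
have key : forall n d, last_visit (iter n Sinv x) -> ~ last_visit (iter (d.+1 + n) Sinv x).
  by move=> k d [Ek _] [_ hN]; apply: (hN d); rewrite iter_cancelDr.
move=> hnm hn hm; case: (ltngtP n m) => [lt|lt|eq]; last by [].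
  by move: hm; rewrite -(subnK lt) -addSnnS; apply: key.
by move: hn; rewrite -(subnK lt) -addSnnS; apply: key.
Qed.

End Recurrence.

Section MeasureRecurrence.
Variables (X : Type) (opn : (X -> Prop) -> Prop) (mu : (X -> Prop) -> R).
Variables (S Sinv : X -> X) (E : X -> bool).
Hypotheses (pm : prob_measure opn mu) (SK : cancel S Sinv) (SinvK : cancel Sinv S).
Hypotheses (S_cont : continuous_map opn S) (Sinv_cont : continuous_map opn Sinv).
Hypothesis S_inv : forall A, borel opn A -> mu (fun x => A (S x)) = mu A.
Hypothesis E_open : opn (fun x => E x).

Lemma borel_never_returns : borel opn (never_returns S E).
Proof.
apply: (borel_ext (borel_compl (borel_union (fun n =>
  borel_iter n.+1 S_cont (borel_open E_open))))).
by move=> x; split=> [h n hn|h [n hn]]; [apply: h; exists n | apply: (h n)].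
Qed.

Lemma borel_orbit_meets : borel opn (orbit_meets S Sinv E).
Proof.
apply: borel_union => n; apply: borel_or.
  exact: borel_iter S_cont (borel_open E_open).
exact: borel_iter Sinv_cont (borel_open E_open).
Qed.

(* Poincare recurrence: if almost every orbit meets E, then almost every
   point returns to E in the future, since the last visits to E have
   infinitely many disjoint translates of equal measure *)
Lemma never_returns_null :
  mu (fun x => ~ orbit_meets S Sinv E x) = 0 -> mu (never_returns S E) = 0.
Proof.
move=> hnull.
pose A n x := last_visit S E (iter n Sinv x).
have bA : forall n, borel opn (A n).
  by move=> n; apply: (borel_iter _ Sinv_cont (borel_and (borel_open E_open) borel_never_returns)).
have copies : forall n, mu (A n) = mu (A 0%N).
  elim=> [|n ih] //; rewrite -ih -(S_inv (bA n.+1)); apply: (mu_ext pm) => x.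
  by rewrite /A iterSr SK.
have hU := mu_disjoint_copies_null pm bA (@last_visits_disjoint _ _ _ _ SinvK) copies.
have bnI := borel_compl borel_orbit_meets.
have bU : borel opn (fun x => exists n, A n x) by exact: borel_union.
have cover : forall x, never_returns S E x -> ~ orbit_meets S Sinv E x \/ exists n, A n x.
  move=> x hx; case: (classic (orbit_meets S Sinv E x)) => hm; [right|by left].
  by have [j hj] := last_visit_before SinvK hm hx; exists j.
have := mu_mono pm borel_never_returns (borel_or bnI bU) cover.
have := mu_subadd2 pm bnI bU.
have := mu_ge0 pm borel_never_returns.
by rewrite hnull hU; lra.
Qed.

End MeasureRecurrence.

Section ErgodicRecurrence.
Variables (X : Type) (opn : (X -> Prop) -> Prop) (mu : (X -> Prop) -> R).
Variables (T Tinv : X -> X) (E : X -> bool).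
Hypotheses (pm : prob_measure opn mu) (hT : homeo opn T Tinv).
Hypotheses (T_inv : mu_invariant opn T mu) (T_erg : is_ergodic opn T mu).
Hypotheses (E_open : opn (fun x => E x)) (E_pos : 0 < mu (fun x => E x)).

Lemma orbit_meets_shift (x : X) : orbit_meets T Tinv E (T x) <-> orbit_meets T Tinv E x.
Proof.
have [TK [TinvK _]] := hT.
split=> -[[|n] [h|h]].
- by exists 1%N; left.
- by exists 1%N; left.
- by exists n.+2; left; rewrite iterSr.
- by exists n; right; rewrite iterSr TK in h.
- by exists 1%N; right; rewrite /= TK.
- by exists 1%N; right; rewrite /= TK.
- by exists n; left; rewrite -iterSr.
- by exists n.+2; right; rewrite iterSr TK.
Qed.

Lemma orbit_meets_conull : mu (fun x => ~ orbit_meets T Tinv E x) = 0.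
Proof.
have [_ [_ [T_cont Tinv_cont]]] := hT.
have bI := borel_orbit_meets T_cont Tinv_cont E_open.
have bE := borel_open E_open.
have hI : mu (orbit_meets T Tinv E) = 1.
  have := mu_mono pm bE bI (fun x hx => ex_intro _ 0%N (or_introl hx)).
  by case: (T_erg bI orbit_meets_shift) => ->; lra.
have hall : mu (fun x => orbit_meets T Tinv E x \/ ~ orbit_meets T Tinv E x) = R1.
  have [_ [_ [htop _]]] := pm; rewrite -htop; apply: (mu_ext pm) => x.
  by split => // _; apply: classic.
have := mu_add2 pm bI (borel_compl bI) (fun x a b => b a).
by rewrite hall hI; lra.
Qed.

Lemma recurrent_point (V : X -> Prop) :
  opn V -> 0 < mu V ->
  exists y, V y /\ (exists n, E (iter n.+1 T y)) /\ (exists m, E (iter m Tinv y)).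
Proof.
move=> V_open V_pos; have [TK [TinvK [T_cont Tinv_cont]]] := hT.
have Tinv_inv : forall A, borel opn A -> mu (fun x => A (Tinv x)) = mu A.
  move=> A hA; rewrite -(T_inv (borel_preimage Tinv_cont hA)).
  by apply: (mu_ext pm) => x; rewrite TK.
have fwd := never_returns_null pm TK TinvK T_cont Tinv_cont T_inv E_open orbit_meets_conull.
have bwd : mu (never_returns Tinv E) = 0.
  apply: (never_returns_null pm TinvK TK Tinv_cont T_cont Tinv_inv E_open).
  rewrite -orbit_meets_conull; apply: (mu_ext pm) => x.
  by split=> h [n hn]; apply: h; exists n; tauto.
have [y [Vy [hf hb]]] := positive_not_covered pm (borel_open V_open)
  (borel_never_returns T_cont E_open) (borel_never_returns Tinv_cont E_open) V_pos fwd bwd.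
exists y; split => //; split; apply: NNPP => hn; [apply: hf|apply: hb] => n En.
  by apply: hn; exists n.
by apply: hn; exists n.+1.
Qed.

End ErgodicRecurrence.

Close Scope R_scope.
Local Open Scope ring_scope.

(* membership facts linking List.In with the sequence operations of MathComp,
   needed because the partition P is a list of (non-decidable) predicates *)
Lemma In_nth (A : Type) (d : A) (s : seq A) (i : nat) :
  (i < size s)%N -> List.In (nth d s i) s.
Proof. by elim: s i => [|a s ih] [|i] //= hi; [left|right; apply: ih]. Qed.

Lemma In_has (A : Type) (p : pred A) (s : seq A) (z : A) : List.In z s -> p z -> has p s.
Proof. by elim: s => [|a s ih] //= [->->|/ih h /h ->]; rewrite ?orbT. Qed.

Lemma In_map_iota (B : Type) (f : nat -> B) (m n : nat) (z : B) :
  List.In z (map f (iota m n)) -> exists2 i, (m <= i < m + n)%N & z = f i.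
Proof.
elim: n m => [|n ih] m //= [<-|/ih [i hi ->]]; first by exists m => //; lia.
by exists i => //; lia.
Qed.

Lemma Tpow_Nnat (X : Type) (T Tinv : X -> X) (l : nat) : Tpow T Tinv (- Posz l) = iter l Tinv.
Proof. by case: l. Qed.

Section Itinerary.
Variables (X : Type) (opn : (X -> Prop) -> Prop) (K : fieldType) (T Tinv : X -> X).
Variables (E : X -> bool) (P : seq (X -> bool)).
Hypotheses (TK : cancel T Tinv) (TinvK : cancel Tinv T) (hP : partition_of opn E P).

Definition cell (z : X) : X -> bool := nth (fun _ => false) P (find (fun Z : X -> bool => Z z) P).

Lemma cell_spec (z : X) : ~~ E z -> List.In (cell z) P /\ cell z z.
Proof.
have [_ [_ hcover]] := hP; move=> /hcover [Z [PZ Zz]].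
have hz := @In_has _ (fun Z : X -> bool => Z z) _ _ PZ Zz.
by split; [apply: In_nth; rewrite -has_find | exact: (nth_find _ hz)].
Qed.

Lemma cell_avoids_E (Z : X -> bool) (z : X) : List.In Z P -> Z z -> ~~ E z.
Proof. by have [_ [_ hcover]] := hP => PZ Zz; apply/hcover; exists Z. Qed.

Definition itinerary (n : nat) (x : X) : seq (X -> bool) :=
  [seq cell (iter i.+1 T x) | i <- iota 0 n].

Lemma itinerary_word (n : nat) (x : X) :
  E x -> E (iter n.+1 T x) -> (forall i, (0 < i <= n)%N -> ~~ E (iter i T x)) ->
  inV T Tinv E P (itinerary n x) /\ Wset T Tinv E (itinerary n x) x.
Proof.
move=> Ex Eret gap.
have size_it : size (itinerary n x) = n by rewrite size_map size_iota.
have nth_it : forall i, (i < n)%N -> nth (fun _ => false) (itinerary n x) i = cell (iter i.+1 T x).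
  by move=> i hi; rewrite (nth_map 0%N) ?size_iota // nth_iota.
have Wx : Wset T Tinv E (itinerary n x) x.
  apply/and3P; split => //; last by rewrite size_it.
  apply/forallP => i; have hi : (i < n)%N by apply: (leq_trans (ltn_ord i)); rewrite size_it.
  by rewrite nth_it //; apply: (cell_spec (gap _ _)).2; lia.
split => //; split; last by exists x.
move=> Z hZ; have [i hi ->] := In_map_iota hZ; apply: (cell_spec (gap _ _)).1; lia.
Qed.

Lemma first_return_word (x : X) :
  E x -> (exists n, E (iter n.+1 T x)) ->
  exists zs, inV T Tinv E P zs /\ Wset T Tinv E zs x.
Proof.
move=> Ex hret; have [n Eret minret] := ex_minnP hret.
exists (itinerary n x); apply: itinerary_word => // -[|i] // /andP [_ hi].
by apply/negP => /minret; lia.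
Qed.

Lemma word_gap (zs : seq (X -> bool)) (z : X) :
  (forall Z, List.In Z zs -> List.In Z P) -> Wset T Tinv E zs z ->
  forall i, (0 < i <= size zs)%N -> ~~ E (iter i T z).
Proof.
move=> zsP /and3P [_ /forallP hcells _] [|i] // /andP [_ hi].
have := hcells (Ordinal hi); apply: cell_avoids_E.
exact/zsP/In_nth.
Qed.

Lemma hW_orbit_segment (zs : seq (X -> bool)) (x : X) (p : nat) :
  (forall Z, List.In Z zs -> List.In Z P) -> Wset T Tinv E zs x -> (p <= size zs)%N ->
  hW K T Tinv E zs (iter p T x) = 1.
Proof.
move=> zsP Wx hp; have gap := word_gap zsP.
have Ex : E x by case/and3P: Wx.
rewrite /hW (bigD1 (Ordinal (hp : (p < (size zs).+1)%N))) //= big1 ?addr0.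
  by rewrite Tpow_Nnat iter_cancel // /chi Wx.
move=> l /eqP hl; rewrite Tpow_Nnat /chi; case Wl: Wset => //; exfalso.
have hlp : (l : nat) <> p by move=> e; apply: hl; apply: val_inj.
case: (ltngtP l p) => [hlt|hgt|//].
- have e : iter l Tinv (iter p T x) = iter (p - l) T x.
    by rewrite -{1}(subnKC (ltnW hlt)) iter_cancelDr.
  by move: Wl; rewrite e => /and3P [+ _ _]; apply/negP/(gap _ Wx); lia.
- have e : iter l Tinv (iter p T x) = iter (l - p) Tinv x.
    by rewrite -{1}(subnK (ltnW hgt)) iterD iter_cancel.
  suff : ~~ E x by rewrite Ex.
  rewrite -(iter_cancel TinvK (l - p) x) -e; apply: (gap _ Wl).
  by have := ltn_ord l; lia.
Qed.

Lemma orbit_segment_word (y : X) :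
  (exists n, E (iter n.+1 T y)) -> (exists m, E (iter m Tinv y)) ->
  exists zs, inV T Tinv E P zs /\ hW K T Tinv E zs y = 1.
Proof.
move=> [n Efwd] hbwd; have [p Ex minp] := ex_minnP hbwd.
set x := iter p Tinv y in Ex.
have no_early : forall i, (0 < i <= p)%N -> ~~ E (iter i T x).
  move=> i hi; rewrite /x -(subnKC (proj2 (andP hi) : (i <= p)%N)) iter_cancelDr //.
  by apply/negP => /minp; lia.
have [zs [zsV Wx]] : exists zs, inV T Tinv E P zs /\ Wset T Tinv E zs x.
  by apply: first_return_word => //; exists (p + n)%N; rewrite -addnS /x iter_cancelDl.
exists zs; split => //; rewrite -[y](iter_cancel TinvK p).
apply: (hW_orbit_segment (proj1 zsV) Wx); rewrite leqNgt; apply/negP => hlt.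
by case/and3P: Wx => _ _; apply/negP/no_early; lia.
Qed.

End Itinerary.

Theorem lemma3p11 (X : Type) (opn : (X -> Prop) -> Prop) (T Tinv : X -> X)
  (mu : (X -> Prop) -> R) (K : fieldType) (conj : {rmorphism K -> K})
  (E : X -> bool) (P : seq (X -> bool)) (b : X -> K)
  (Us : seq (K * (X -> bool))) :
  metrizable opn -> compact_space opn -> totally_disconnected opn -> infinite_type X ->
  homeo opn T Tinv ->
  prob_measure opn mu -> mu_invariant opn T mu -> is_ergodic opn T mu -> full_measure opn mu ->
  involutive conj ->
  clopen opn E -> (exists x, E x) -> partition_of opn E P ->
  inB0 opn conj T Tinv P b -> (exists x, b x != 0) ->
  (forall u, List.In u Us -> [/\ clopen opn u.2, exists x, u.2 x & u.1 != 0]) ->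
  (forall i j, (i < size Us)%N -> (j < size Us)%N -> i <> j ->
     forall x, ~~ ((nth (0, fun _ => false) Us i).2 x &&
                   (nth (0, fun _ => false) Us j).2 x)) ->
  (forall x, b x = \sum_(u <- Us) u.1 * chi K u.2 x) ->
  exists zs, inV T Tinv E P zs /\ exists x, hW K T Tinv E zs x * b x != 0.
Proof.
move=> _ _ _ _ hT pm T_inv T_erg full _ [E_open _] [xE ExE] hP [b_loc _] [x0 bx0] _ _ _.
have [V [V_open [Vx0 bV]]] := b_loc x0.
have E_pos : Rlt R0 (mu (fun x => E x)) by apply: full => //; exists xE.
have V_pos : Rlt R0 (mu V) by apply: full => //; exists x0.
have [y [Vy [fwd bwd]]] := recurrent_point pm hT T_inv T_erg E_open E_pos V_open V_pos.
have [TK [TinvK _]] := hT.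
have [zs [zsV hWy]] := orbit_segment_word K TK TinvK hP fwd bwd.
by exists zs; split => //; exists y; rewrite hWy mul1r bV.
Qed.
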